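(* Let $\mathcal{A}$ be a complex unital Banach algebra and let $x_1,x_2,x_3\in\mathcal{A}$ satisfy $$x_1x_2+x_1x_3+x_2x_3=\alpha_1+\alpha_2(x_1+x_2+x_3)\quad\text{and}\quad x_1x_2x_3=\beta(x_1+x_2+x_3)$$ for some $(\alpha_1,\alpha_2,\beta)\in\mathbb{C}^3\setminus\mathcal{M}$, where $$\mathcal{M}=\{(\alpha_1,\alpha_2,0):\alpha_1,\alpha_2\in\mathbb{C},\ \alpha_1\alpha_2\neq0\}\cup\{(\alpha_1,0,0):\alpha_1\in\mathbb{C}\setminus\{0\}\}.$$ Let $X=\{x_1,x_2,x_3,x_1+x_2+x_3\}$. If any three of the four elements of $X$ are Drazin invertible, then the remaining one is also Drazin invertible.
   Context: $\mathcal{A}$ is a complex unital Banach algebra with unit $1$ (scalars $\lambda$ are identified with $\lambda 1$). An element $a\in\mathcal{A}$ is Drazin invertible if there exists $b\in\mathcal{A}$ (the Drazin inverse, denoted $a^d$) with $ab=ba$, $bab=b$, and $(a(1-ab))^n=0$ for some $n\in\mathbb{N}$; the smallest such $n$ is the Drazin index $i(a)$. $\mathcal{A}^d$ denotes the set of Drazin invertible elements. *)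

From HB Require Import structures.
From mathcomp Require Import all_boot all_order all_algebra.
From mathcomp Require Import all_classical all_reals.
From mathcomp Require Import complex.

Set Implicit Arguments.
Unset Strict Implicit.
Unset Printing Implicit Defensive.

Import Order.TTheory GRing.Theory Num.Theory.
Local Open Scope ring_scope.

Definition is_banach_algebra_norm (R : realType) (A : algType R[i]%C)
    (nrm : A -> R) : Prop :=
  (forall x : A, 0 <= nrm x) /\
  (forall x : A, nrm x = 0 -> x = 0) /\
  (forall x y : A, nrm (x + y) <= nrm x + nrm y) /\
      (forall (k : R[i]%C) (x : A), (nrm (k *: x))%:C%C = `|k| * (nrm x)%:C%C) /\
      (forall x y : A, nrm (x * y) <= nrm x * nrm y) /\
      nrm 1 = 1 /\
      (forall u : nat -> A,
         (forall e : R, 0 < e -> exists N : nat, forall m n : nat,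
              (N <= m)%N -> (N <= n)%N -> nrm (u m - u n) < e) ->
         exists l : A, forall e : R, 0 < e -> exists N : nat, forall n : nat,
              (N <= n)%N -> nrm (u n - l) < e).

Definition is_drazin_inverse (A : ringType) (a b : A) : Prop :=
  a * b = b * a /\ b * a * b = b /\ exists n : nat, (a * (1 - a * b)) ^+ n = 0.

Definition drazin_invertible (A : ringType) (a : A) : Prop :=
  exists b : A, is_drazin_inverse a b.

(* Regard polynomials over A as truncated power series in A[[X]], and say
   that P divides a power of X when P G = G P = X^N for some series G; such
   divisors are closed under products and satisfy two-out-of-three
   cancellation.  Let R = X^(e+1) R0 with R0 <> 0 and Q = X^e Q0 with
   Q0(0) <> 0 be scalar polynomials.  Then R - Q s = Q (Phi - s) with
   Phi = X R0 / Q0, and s is Drazin invertible iff R - Q s divides a power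
   of X.  Given a Drazin inverse b, the series -(sum_k Phi^k b^(k+1)) inverts
   Phi - s on the range of the idempotent s b, and on its kernel, where s is
   nilpotent, R - Q s divides R^n.  Conversely, if (s - Phi) H = H (s - Phi)
   = X^N, the X^N-coefficient c of H commutes with s and s^N = s^(N+1) c.
   The hypotheses of the theorem say that
   (X - x1)(X - x2)(X - x3) = (X^3 + a1 X) - (X^2 - a2 X + b) (x1 + x2 + x3),
   and (a1, a2, b) lies outside M exactly when these R and Q have the
   valuations above. *)

From HB Require Import structures.
From mathcomp Require Import all_boot all_order all_algebra.
From mathcomp Require Import all_classical all_reals.
From mathcomp Require Import complex.
From mathcomp Require Import ring.
Import Order.TTheory GRing.Theory Num.Theory.
Local Open Scope ring_scope.

Set Implicit Arguments.
Unset Strict Implicit.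
Unset Printing Implicit Defensive.

Definition eqmodX (T : nzRingType) (K : nat) (P Q : {poly T}) :=
  forall i, (i < K)%N -> P`_i = Q`_i.

Notation "P = Q %[modX K ]" := (eqmodX K P Q)
  (at level 70, Q at next level, format "P  =  Q  %[modX  K ]") : ring_scope.

Section TruncatedCongruence.
Variables (T : nzRingType) (K : nat).
Implicit Types P Q : {poly T}.

Lemma eqmodX_sym P Q : P = Q %[modX K] -> Q = P %[modX K].
Proof. by move=> h i hi; rewrite h. Qed.

Lemma eqmodX_trans Q P S : P = Q %[modX K] -> Q = S %[modX K] -> P = S %[modX K].
Proof. by move=> h1 h2 i hi; rewrite h1 // h2. Qed.

Lemma eqmodX_leq K' P Q : (K' <= K)%N -> P = Q %[modX K] -> P = Q %[modX K'].
Proof. by move=> hK h i hi; apply: h; apply: leq_trans hK. Qed.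

Lemma eqmodXD P P' Q Q' :
  P = P' %[modX K] -> Q = Q' %[modX K] -> P + Q = P' + Q' %[modX K].
Proof. by move=> h1 h2 i hi; rewrite !coefD h1 // h2. Qed.

Lemma eqmodXB P P' Q Q' :
  P = P' %[modX K] -> Q = Q' %[modX K] -> P - Q = P' - Q' %[modX K].
Proof. by move=> h1 h2 i hi; rewrite !coefB h1 // h2. Qed.

Lemma eqmodXMl M P P' : P = P' %[modX K] -> M * P = M * P' %[modX K].
Proof.
move=> h i hi; rewrite !coefM; apply: eq_bigr => j _; rewrite h //.
exact: leq_ltn_trans (leq_subr _ _) hi.
Qed.

Lemma eqmodXMr M P P' : P = P' %[modX K] -> P * M = P' * M %[modX K].
Proof.
move=> h i hi; rewrite !coefM; apply: eq_bigr => j _; rewrite h //.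
by apply: leq_ltn_trans hi; rewrite -ltnS.
Qed.

Lemma eqmodXM P P' Q Q' :
  P = P' %[modX K] -> Q = Q' %[modX K] -> P * Q = P' * Q' %[modX K].
Proof. by move=> h1 h2; apply: eqmodX_trans (eqmodXMr _ h1) (eqmodXMl _ h2). Qed.

Lemma eqmodXX P P' n : P = P' %[modX K] -> P ^+ n = P' ^+ n %[modX K].
Proof.
by move=> h; elim: n => [|n ih]; rewrite ?expr0 // !exprS; apply: eqmodXM.
Qed.

Lemma eqmodX_mulXn M P Q :
  P * 'X^M = Q * 'X^M %[modX K + M] -> P = Q %[modX K].
Proof.
move=> h i hi; have := h (i + M)%N; rewrite !coefMXn ltn_add2r hi.
by rewrite ltnNge leq_addl /= addnK => ->.
Qed.

End TruncatedCongruence.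

Lemma eqmodX_invertible (F : fieldType) (P : {poly F}) K :
  P`_0 != 0 -> exists W, P * W = 1 %[modX K].
Proof.
move=> P0; elim: K => [|K [W hW]]; first by exists 0.
pose c := ((1 : {poly F})`_K - (P * W)`_K) / P`_0.
exists (W + c *: 'X^K) => i; rewrite ltnS leq_eqVlt => /orP[/eqP ->|hi].
  by rewrite mulrDr -scalerAr coefD coefZ coefMXn ltnn subnn divfK // addrC subrK.
by rewrite mulrDr -scalerAr coefD coefZ coefMXn hi mulr0 addr0 hW.
Qed.

Section DivisorsOfPowersOfX.
Variable T : nzRingType.
Implicit Types P Q : {poly T}.

(* P divides X^N on both sides in A[[X]], at every finite precision. *)
Definition divXn P := exists N, forall K, exists G,
  P * G = 'X^N %[modX K] /\ G * P = 'X^N %[modX K].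

Lemma divXnM P Q : divXn P -> divXn Q -> divXn (P * Q).
Proof.
move=> [Np hP] [Nq hQ]; exists (Np + Nq)%N => K.
have [GP [PGP GPP]] := hP K; have [GQ [QGQ GQQ]] := hQ K.
exists (GQ * GP); split.
  rewrite addnC exprD -mulrA (mulrA Q).
  apply: eqmodX_trans (eqmodXMl _ (eqmodXMr _ QGQ)) _.
  by rewrite mulrA (commr_polyXn P) -mulrA; apply: eqmodXMl.
rewrite exprD -mulrA (mulrA GP); apply: eqmodX_trans (eqmodXMl _ (eqmodXMr _ GPP)) _.
by rewrite mulrA (commr_polyXn GQ) -mulrA; apply: eqmodXMl.
Qed.

Lemma divXn_cancelr P Q : divXn (P * Q) -> divXn Q -> divXn P.
Proof.
move=> [N hPQ] [M hQ]; exists N => K.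
have [G [PQG GPQ]] := hPQ (K + M)%N; have [H [QH _]] := hQ (K + M)%N.
exists (Q * G); split; first by rewrite mulrA; apply: eqmodX_leq PQG; apply: leq_addr.
apply: (eqmodX_mulXn (M := M)); rewrite -exprD.
have GPXM : G * P * 'X^M = 'X^N * H %[modX K + M].
  apply: eqmodX_trans (eqmodXMl _ (eqmodX_sym QH)) _.
  by rewrite mulrA; apply: eqmodXMr; rewrite -mulrA; exact: GPQ.
have := eqmodXMl Q GPXM; rewrite !mulrA => QGPXM; apply: eqmodX_trans QGPXM _.
by rewrite (commr_polyXn Q) -mulrA exprD; apply: eqmodXMl.
Qed.

Lemma divXn_cancell P Q : divXn (P * Q) -> divXn P -> divXn Q.
Proof.
move=> [N hPQ] [M hP]; exists N => K.
have [G [PQG GPQ]] := hPQ (K + M)%N; have [H [_ HP]] := hP (K + M)%N.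
exists (G * P); split; last by rewrite -mulrA; apply: eqmodX_leq GPQ; apply: leq_addr.
apply: (eqmodX_mulXn (M := M)); rewrite -exprD.
have XMQG : 'X^M * (Q * G) = H * 'X^N %[modX K + M].
  apply: eqmodX_trans (eqmodXMr _ (eqmodX_sym HP)) _.
  by rewrite -mulrA; apply: eqmodXMl; rewrite mulrA; exact: PQG.
have := eqmodXMr P XMQG; rewrite !mulrA => XMQGP.
rewrite (commr_polyXn (Q * G * P)) !mulrA; apply: eqmodX_trans XMQGP _.
by rewrite -mulrA -(commr_polyXn P) mulrA (addnC N) exprD; apply: eqmodXMr.
Qed.

End DivisorsOfPowersOfX.

Lemma drazin_invertible_of_expS (T : nzRingType) (s c : T) m :
  s * c = c * s -> s ^+ m = s ^+ m.+1 * c -> drazin_invertible s.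
Proof.
move=> sc smc.
have sSc k : (m <= k)%N -> s ^+ k.+1 * c = s ^+ k.
  by move=> mk; rewrite -(subnK mk) -addnS !exprD -mulrA -smc.
have smcX k j : (m <= k)%N -> s ^+ (k + j) * c ^+ j = s ^+ k.
  move=> mk; elim: j => [|j ih]; first by rewrite addn0 mulr1.
  by rewrite addnS (exprS c) mulrA sSc ?ih // (leq_trans mk (leq_addr _ _)).
have scX i j : GRing.comm (s ^+ i) (c ^+ j) by apply/commrX/commr_sym/commrX.
pose e := s ^+ m * c ^+ m.
have ee : e * e = e.
  by rewrite /e -!mulrA (mulrA (c ^+ m)) -scX -!mulrA mulrA -exprD mulrA smcX.
pose b := s ^+ m * c ^+ m.+1.
have sb : s * b = e by rewrite /b mulrA -exprS (exprS c) mulrA sSc.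
have bs : b * s = e.
  have cXs : s * c ^+ m.+1 = c ^+ m.+1 * s by apply: commrX.
  by rewrite /b -mulrA -cXs mulrA -exprSr (exprS c) mulrA sSc.
exists b; split; [by rewrite sb bs | split].
- have eb : e * c = b by rewrite /e /b -mulrA -exprSr.
  by rewrite bs -eb mulrA ee.
- exists m.+1.
  have e1X k : (1 - e) ^+ k.+1 = 1 - e.
    elim: k => [|k ih]; first by rewrite expr1.
    by rewrite exprS ih mulrBl mul1r mulrBr mulr1 ee subrr subr0.
  rewrite sb exprMn_comm; last first.
    by apply: commrB; [exact: commr1 | apply: commrM; [exact: commrX | apply/commrX]].
  by rewrite e1X mulrBr mulr1 /e mulrA -exprD smcX // subrr.
Qed.

Notation alg_poly A := (map_poly (GRing.in_alg A)).

Section AlgPoly.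
Variables (F : fieldType) (A : algType F).
Implicit Types (p q Phi : {poly F}) (P : {poly A}).

Lemma alg_poly_comm p P : alg_poly A p * P = P * alg_poly A p.
Proof.
apply/polyP => i; rewrite coefM coefMr; apply: eq_bigr => j _.
by rewrite coef_map /= mulr_algl mulr_algr.
Qed.

Lemma eqmodX_alg_poly K p q :
  p = q %[modX K] -> alg_poly A p = alg_poly A q %[modX K].
Proof. by move=> h i hi; rewrite !coef_map /= h. Qed.

Lemma coefM_alg_poly_exp_lt Phi P k n :
  Phi`_0 = 0 -> (n < k)%N -> (P * alg_poly A (Phi ^+ k))`_n = 0.
Proof.
move=> Phi0 nk; have -> : Phi = drop_poly 1 Phi * 'X.
  have take0 : take_poly 1 Phi = 0.
    by apply/polyP => i; rewrite coefE coef0; case: i.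
  by rewrite -{1}(poly_take_drop 1 Phi) take0 add0r expr1.
rewrite exprMn_comm; last exact: commr_polyX.
by rewrite rmorphM /= map_polyXn mulrA coefMXn nk.
Qed.

Lemma drazin_invertible_of_series_inverse (s : A) Phi (H : {poly A}) N :
  Phi`_0 = 0 ->
  (s%:P - alg_poly A Phi) * H = 'X^N %[modX N.+1] ->
  H * (s%:P - alg_poly A Phi) = 'X^N %[modX N.+1] ->
  drazin_invertible s.
Proof.
move=> Phi0 leftH rightH.
have sH : s * H`_N = H`_N * s.
  have := leftH N (ltnSn N); rewrite -(rightH N (ltnSn N)).
  rewrite mulrBl mulrBr !coefB alg_poly_comm coefCM coefMC.
  by move/(congr1 (+%R^~ (H * alg_poly A Phi)`_N)); rewrite !subrK.
(* Multiply H (s - Phi) = X^N by sum_i s^(N-i) Phi^i and compare the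
   coefficients of X^N: the term Phi^(N+1) only starts at X^(N+1). *)
have HsN : H`_N * s ^+ N.+1 = s ^+ N.
  have sPhi : GRing.comm s%:P (alg_poly A Phi) by rewrite /GRing.comm alg_poly_comm.
  have := eqmodXMr (\sum_(i < N.+1) s%:P ^+ (N - i) * alg_poly A Phi ^+ i) rightH.
  move/(_ N (ltnSn N)); rewrite -mulrA -subrXX_comm // mulrBr coefB.
  rewrite -[alg_poly A Phi ^+ _]rmorphXn coefM_alg_poly_exp_lt // subr0.
  rewrite -[s%:P ^+ _]rmorphXn /= coefMC coefXnM ltnn subnn.
  rewrite coef_sum big_ord_recl big1 => [|i _]; last first.
    by rewrite -[alg_poly A Phi ^+ _]rmorphXn coefM_alg_poly_exp_lt.
  by rewrite addr0 subn0 expr0 mulr1 -[s%:P ^+ _]rmorphXn coefC.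
apply: (drazin_invertible_of_expS (c := H`_N) (m := N)) => //.
by rewrite -HsN; apply/commrX.
Qed.

Lemma eqmodX_factor_series (s : A) (R0 Q0 W : {poly F}) e K :
  Q0 * W = 1 %[modX K] ->
  alg_poly A ('X^(e.+1) * R0) - alg_poly A ('X^e * Q0) * s%:P
    = alg_poly A ('X^e * Q0) * (alg_poly A ('X * R0 * W) - s%:P) %[modX K].
Proof.
move=> Q0W; rewrite mulrBr -rmorphM; apply: eqmodXB => //; apply: eqmodX_alg_poly.
have -> : 'X^e * Q0 * ('X * R0 * W) = 'X^(e.+1) * R0 * (Q0 * W).
  by rewrite exprS; ring.
by rewrite -{1}['X^(e.+1) * R0]mulr1; apply: eqmodXMl; apply: eqmodX_sym.
Qed.

Lemma drazin_invertible_of_divXn (s : A) (R Q R0 Q0 : {poly F}) e :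
  Q = 'X^e * Q0 -> Q0`_0 != 0 -> R = 'X^(e.+1) * R0 ->
  divXn (alg_poly A R - alg_poly A Q * s%:P) -> drazin_invertible s.
Proof.
move=> -> Q00 -> [N divN].
have [G [FG GF]] := divN N.+1; have [W Q0W] := eqmodX_invertible N.+1 Q00.
pose Phi := 'X * R0 * W; pose Z := alg_poly A ('X^e * Q0).
have Phi0 : Phi`_0 = 0 by rewrite /Phi -mulrA coefXM.
have FZ := eqmodX_factor_series s R0 e Q0W.
apply: (drazin_invertible_of_series_inverse (H := - (Z * G)) Phi0) => //.
  rewrite mulrN -mulNr opprB mulrA -alg_poly_comm.
  exact: eqmodX_trans (eqmodXMr G (eqmodX_sym FZ)) FG.
rewrite mulNr -mulrN opprB /Z alg_poly_comm -mulrA.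
exact: eqmodX_trans (eqmodXMl G (eqmodX_sym FZ)) GF.
Qed.

End AlgPoly.

Section DrazinSplitting.
Variables (F : fieldType) (A : algType F) (a b : A) (n : nat).
Hypotheses (ab_comm : a * b = b * a) (bab : b * a * b = b).
Hypothesis a_nil : (a * (1 - a * b)) ^+ n = 0.

Lemma regular_geometric_sum (Phi : {poly F}) m :
  (a%:P - alg_poly A Phi) * \sum_(k < m.+1) alg_poly A (Phi ^+ k) * (b ^+ k.+1)%:P
  = (a * b)%:P - alg_poly A (Phi ^+ m.+1) * (b ^+ m.+1)%:P.
Proof.
elim: m => [|m ih].
  by rewrite big_ord1 expr0 rmorph1 mul1r expr1 mulrBl polyCM expr1.
rewrite big_ord_recr /= mulrDr ih mulrBl -addrA; congr (_ + _).
have abS : a * b ^+ m.+2 = b ^+ m.+1.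
  by rewrite exprS mulrA ab_comm (exprS b) mulrA bab -exprS.
rewrite mulrA -alg_poly_comm -mulrA -polyCM abS.
by rewrite addrA addNr add0r mulrA -rmorphM -exprS.
Qed.

Lemma nilpotent_geometric_sum (R Q : {poly F}) :
  (alg_poly A R - alg_poly A Q * a%:P) *
    (\sum_(i < n) alg_poly A R ^+ (n.-1 - i) * (alg_poly A Q * a%:P) ^+ i)
    * (1 - a * b)%:P = alg_poly A (R ^+ n) * (1 - a * b)%:P.
Proof.
have RQa : GRing.comm (alg_poly A R) (alg_poly A Q * a%:P).
  by apply: commrM; exact: alg_poly_comm.
rewrite -subrXX_comm // mulrBl rmorphXn.
suff -> : (alg_poly A Q * a%:P) ^+ n * (1 - a * b)%:P = 0 by rewrite subr0.
have pp : (1 - a * b) * (1 - a * b) = 1 - a * b.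
  by rewrite mulrBl mul1r mulrBr mulr1 -mulrA (mulrA b) bab subrr subr0.
have ap : GRing.comm a (1 - a * b).
  by apply: commrB; [exact: commr1 | apply: commrM].
have anp : a ^+ n * (1 - a * b) = 0.
  case: n a_nil => [|m].
    by rewrite !expr0 mul1r => one0; rewrite -[1 - _]mul1r one0 mul0r.
  have pX k : (1 - a * b) ^+ k.+1 = 1 - a * b.
    by elim: k => [|k ih]; rewrite ?expr1 // exprS ih pp.
  by rewrite exprMn_comm // pX.
rewrite exprMn_comm; last exact: alg_poly_comm.
by rewrite -mulrA -[a%:P ^+ _]rmorphXn -polyCM anp mulr0.
Qed.

Lemma regular_part_inverse (R0 Q0 W : {poly F}) e m K :
  Q0 * W = 1 %[modX K] ->
  (alg_poly A ('X^(e.+1) * R0) - alg_poly A ('X^e * Q0) * a%:P) *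
    - (alg_poly A ('X^m * W) *
       \sum_(k < K.+1) alg_poly A (('X * R0 * W) ^+ k) * (b ^+ k.+1)%:P)
  = 'X^(e + m) * (a * b)%:P %[modX K].
Proof.
move=> Q0W; set Phi := 'X * R0 * W.
have Phi0 : Phi`_0 = 0 by rewrite /Phi -mulrA coefXM.
apply: eqmodX_trans (eqmodXMr _ (eqmodX_factor_series a R0 e Q0W)) _.
rewrite -/Phi mulrN -mulNr -mulrN opprB -mulrA (mulrA (_ - _)) -alg_poly_comm.
rewrite !mulrA -rmorphM -mulrA regular_geometric_sum //.
rewrite -{2}(subr0 (a * b)%:P); apply: eqmodXM.
  rewrite -(map_polyXn (GRing.in_alg A)); apply: eqmodX_alg_poly.
  have -> : 'X^e * Q0 * ('X^m * W) = 'X^(e + m) * (Q0 * W).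
    by rewrite exprD; ring.
  by rewrite -{2}['X^(e + m)]mulr1; apply: eqmodXMl.
apply: eqmodXB => // i iK; rewrite alg_poly_comm coefM_alg_poly_exp_lt ?coef0 //.
exact: ltnW.
Qed.

Lemma nilpotent_part_inverse (R Q R1 V : {poly F}) e d K :
  R1 * V = 1 %[modX K] -> R = 'X^d * R1 ->
  (alg_poly A R - alg_poly A Q * a%:P) * (alg_poly A ('X^e * V ^+ n) *
    ((\sum_(i < n) alg_poly A R ^+ (n.-1 - i) * (alg_poly A Q * a%:P) ^+ i)
      * (1 - a * b)%:P))
  = 'X^(e + d * n) * (1 - a * b)%:P %[modX K].
Proof.
move=> R1V R_eq.
rewrite mulrA -alg_poly_comm -mulrA (mulrA (_ - _)) nilpotent_geometric_sum //.
rewrite mulrA -rmorphM; apply: eqmodXMr.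
rewrite -(map_polyXn (GRing.in_alg A)); apply: eqmodX_alg_poly.
have -> : 'X^e * V ^+ n * R ^+ n = 'X^(e + d * n) * (R1 * V) ^+ n.
  by rewrite R_eq exprD exprM !exprMn; ring.
rewrite -{2}['X^(e + d * n)]mulr1 -(expr1n _ n).
by apply: eqmodXMl; apply: eqmodXX.
Qed.

End DrazinSplitting.

Lemma divXn_of_drazin_invertible (F : fieldType) (A : algType F) (a : A)
    (R0 Q0 R1 : {poly F}) e d :
  Q0`_0 != 0 -> R1`_0 != 0 -> 'X^(e.+1) * R0 = 'X^d * R1 ->
  drazin_invertible a ->
  divXn (alg_poly A ('X^(e.+1) * R0) - alg_poly A ('X^e * Q0) * a%:P).
Proof.
move=> Q00 R10 R_eq [b [ab_comm [bab [n a_nil]]]]; exists (e + d * n)%N => K.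
have [W Q0W] := eqmodX_invertible K Q00; have [V R1V] := eqmodX_invertible K R10.
set Fa := _ - _; pose p := 1 - a * b.
pose T := \sum_(k < K.+1) alg_poly A (('X * R0 * W) ^+ k) * (b ^+ k.+1)%:P.
pose S := \sum_(i < n) alg_poly A ('X^(e.+1) * R0) ^+ (n.-1 - i)
                       * (alg_poly A ('X^e * Q0) * a%:P) ^+ i.
pose G := - (alg_poly A ('X^(d * n) * W) * T) + alg_poly A ('X^e * V ^+ n) * (S * p%:P).
have FaG : Fa * G = 'X^(e + d * n) %[modX K].
  have -> : 'X^(e + d * n) = 'X^(e + d * n) * (a * b)%:P + 'X^(e + d * n) * p%:P.
    by rewrite -mulrDr -polyCD /p addrC subrK mulr1.
  rewrite mulrDr; apply: eqmodXD; first exact: regular_part_inverse.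
  exact: nilpotent_part_inverse R_eq.
have Fa_alg q : GRing.comm Fa (alg_poly A q) by rewrite /GRing.comm alg_poly_comm.
have Fa_polyC c : a * c = c * a -> GRing.comm Fa c%:P.
  have cR r : GRing.comm c%:P (alg_poly A r) by exact/commr_sym/alg_poly_comm.
  move=> ac; apply/commr_sym/commrB => //.
  by apply/commrM => //; rewrite /GRing.comm -!polyCM ac.
have FaG_comm : GRing.comm Fa G.
  apply: commrD.
    apply/commrN/commrM => //; apply: commr_sum => k _; apply: commrM => //.
    by apply/Fa_polyC/commrX.
  apply: commrM => //; apply: commrM.
    apply: commr_sum => i _; apply: commrM; first exact/commrX.
    by apply/commrX/commrM => //; apply: Fa_polyC.
  apply: Fa_polyC; rewrite /p mulrBr mulrBl mulr1 mul1r.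
  by rewrite -mulrA -ab_comm mulrA.
by exists G; split; last rewrite -FaG_comm.
Qed.

Lemma Xn_factor (F : fieldType) (R : {poly F}) :
  R != 0 -> exists d, exists2 R1 : {poly F}, R1`_0 != 0 & R = 'X^d * R1.
Proof.
move=> R_neq0; have [d [R1 R10 R_eq]] := multiplicity_XsubC R 0.
exists d, R1; last by rewrite R_eq subr0 mulrC.
by move: R10; rewrite R_neq0 rootE horner_coef0.
Qed.

Lemma drazin_invertible_divXnP (F : fieldType) (A : algType F) (s : A)
    (R Q R0 Q0 : {poly F}) e :
  Q = 'X^e * Q0 -> Q0`_0 != 0 -> R = 'X^(e.+1) * R0 -> R0 != 0 ->
  drazin_invertible s <-> divXn (alg_poly A R - alg_poly A Q * s%:P).
Proof.
move=> Q_eq Q00 R_eq R0_neq0.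
have R_neq0 : R != 0 by rewrite R_eq mulf_neq0 // expf_neq0 // polyX_eq0.
split; last exact: drazin_invertible_of_divXn Q_eq Q00 R_eq.
have [d [R1 R10 R1_eq]] := Xn_factor R_neq0.
rewrite Q_eq R_eq in R1_eq *; exact: divXn_of_drazin_invertible Q00 R10 R1_eq.
Qed.

Lemma drazin_invertible_XsubC (F : fieldType) (A : algType F) (x : A) :
  drazin_invertible x <-> divXn ('X - x%:P).
Proof.
have -> : 'X - x%:P = alg_poly A 'X - alg_poly A 1 * x%:P.
  by rewrite map_polyX rmorph1 mul1r.
apply: (drazin_invertible_divXnP x (R0 := 1) (Q0 := 1) (e := 0%N));
  rewrite ?mul1r ?mulr1 //.
- by rewrite coefC oner_neq0.
- exact: oner_neq0.
Qed.

Lemma XsubC_mul2 (A : nzRingType) (x y : A) :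
  ('X - x%:P) * ('X - y%:P) = 'X^2 - 'X * (x + y)%:P + (x * y)%:P.
Proof.
rewrite mulrBl !mulrBr (commr_polyX x%:P) opprB polyCD polyCM mulrDr opprD expr2 !addrA.
by rewrite addrAC (addrAC (_ * _)).
Qed.

Lemma XsubC_mul3 (A : nzRingType) (x1 x2 x3 : A) :
  ('X - x1%:P) * ('X - x2%:P) * ('X - x3%:P) =
  'X^3 - 'X^2 * (x1 + x2 + x3)%:P + 'X * (x1 * x2 + x1 * x3 + x2 * x3)%:P
  - (x1 * x2 * x3)%:P.
Proof.
rewrite XsubC_mul2 mulrBr !mulrDl !mulNr -exprSr -(mulrA 'X) (commr_polyX (x1 + x2)%:P).
rewrite mulrA -expr2 (commr_polyX (x1 * x2)%:P) !polyCD !polyCM !mulrDr !mulrDl.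
by rewrite !mulrA !opprD !opprK !addrA; congr (_ + _ + _ + _); exact: addrAC.
Qed.

Lemma cubic_factorization (F : fieldType) (A : algType F) (x1 x2 x3 : A)
    (al1 al2 be : F) :
  x1 * x2 + x1 * x3 + x2 * x3 = al1%:A + al2 *: (x1 + x2 + x3) ->
  x1 * x2 * x3 = be *: (x1 + x2 + x3) ->
  ('X - x1%:P) * ('X - x2%:P) * ('X - x3%:P) =
  alg_poly A ('X^3 + al1%:P * 'X)
    - alg_poly A ('X^2 - al2%:P * 'X + be%:P) * (x1 + x2 + x3)%:P.
Proof.
move=> h1 h2; rewrite XsubC_mul3 h1 h2 -[al2 *: _]mulr_algl -[be *: _]mulr_algl.
move: (x1 + x2 + x3) => s.
have -> : alg_poly A ('X^3 + al1%:P * 'X) = 'X^3 + (al1%:A)%:P * 'X.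
  by rewrite rmorphD !rmorphM /= !map_polyX map_polyC -expr2 -exprS.
have -> : alg_poly A ('X^2 - al2%:P * 'X + be%:P)
          = 'X^2 - (al2%:A)%:P * 'X + (be%:A)%:P.
  by rewrite !rmorphD rmorphN !rmorphM /= !map_polyX !map_polyC -expr2.
rewrite polyCD !polyCM mulrDr !mulrDl mulNr !(commr_polyX (_%:A)%:P).
by rewrite mulrA !opprD !opprK !addrA; congr (_ + _ + _); exact: addrAC.
Qed.

Lemma Xadic_valuation_lt (F : fieldType) (al1 al2 be : F) :
  ~ ((be = 0 /\ al1 * al2 != 0) \/ (al2 = 0 /\ be = 0 /\ al1 != 0)) ->
  exists e (Q0 R0 : {poly F}), [/\ 'X^2 - al2%:P * 'X + be%:P = 'X^e * Q0,
    Q0`_0 != 0, 'X^3 + al1%:P * 'X = 'X^(e.+1) * R0 & R0 != 0].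
Proof.
move=> hM; have [be0 | be_neq0] := eqVneq be 0; last first.
  exists 0%N, ('X^2 - al2%:P * 'X + be%:P), ('X^2 + al1%:P); split.
  - by rewrite mul1r.
  - by rewrite coefD coefB coefXn coefCM coefX coefC mulr0 subr0 add0r.
  - by rewrite expr1 mulrDr -exprS mulrC.
  - by rewrite -size_poly_eq0 size_XnaddC.
have al10 : al1 = 0.
  have [// | al1_neq0] := eqVneq al1 0; exfalso; apply: hM.
  have [al20 | al2_neq0] := eqVneq al2 0; first by right.
  by left; rewrite mulf_neq0.
rewrite be0 al10 polyC0 mul0r !addr0.
have [-> | al2_neq0] := eqVneq al2 0.
  by exists 2%N, 1, 1; split; rewrite ?polyC0 ?mul0r ?subr0 ?mulr1 ?coefC ?oner_neq0.
exists 1%N, ('X - al2%:P), 'X; split.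
- by rewrite expr1 mulrBr expr2 (mulrC al2%:P).
- by rewrite coefB coefX coefC subr_eq0 eq_sym.
- by rewrite -exprSr.
- by rewrite polyX_eq0.
Qed.

Theorem theorem2p1 (R : realType) (A : algType R[i]%C) (nrm : A -> R)
    (hA : is_banach_algebra_norm nrm)
    (x1 x2 x3 : A) (alpha1 alpha2 beta : R[i]%C)
    (hM : ~ ((beta = 0 /\ alpha1 * alpha2 != 0) \/
             (alpha2 = 0 /\ beta = 0 /\ alpha1 != 0)))
    (h1 : x1 * x2 + x1 * x3 + x2 * x3 = alpha1%:A + alpha2 *: (x1 + x2 + x3))
    (h2 : x1 * x2 * x3 = beta *: (x1 + x2 + x3)) :
  [/\ (drazin_invertible x2 -> drazin_invertible x3 ->
         drazin_invertible (x1 + x2 + x3) -> drazin_invertible x1),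
      (drazin_invertible x1 -> drazin_invertible x3 ->
         drazin_invertible (x1 + x2 + x3) -> drazin_invertible x2),
      (drazin_invertible x1 -> drazin_invertible x2 ->
         drazin_invertible (x1 + x2 + x3) -> drazin_invertible x3) &
      (drazin_invertible x1 -> drazin_invertible x2 ->
         drazin_invertible x3 -> drazin_invertible (x1 + x2 + x3))].
Proof.
have [e [Q0 [R0 [Q_eq Q00 R_eq R0_neq0]]]] := Xadic_valuation_lt hM.
have sum_divXnP : drazin_invertible (x1 + x2 + x3) <->
    divXn (('X - x1%:P) * ('X - x2%:P) * ('X - x3%:P)).
  rewrite (cubic_factorization h1 h2).
  exact: drazin_invertible_divXnP Q_eq Q00 R_eq R0_neq0.
split.
- move=> /drazin_invertible_XsubC d2 /drazin_invertible_XsubC d3 /sum_divXnP d123.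
  by apply/drazin_invertible_XsubC/(divXn_cancelr _ (divXnM d2 d3)); rewrite mulrA.
- move=> /drazin_invertible_XsubC d1 /drazin_invertible_XsubC d3 /sum_divXnP d123.
  apply/drazin_invertible_XsubC/(divXn_cancelr _ d3)/(divXn_cancell _ d1).
  by rewrite mulrA.
- move=> /drazin_invertible_XsubC d1 /drazin_invertible_XsubC d2 /sum_divXnP d123.
  exact/drazin_invertible_XsubC/(divXn_cancell d123 (divXnM d1 d2)).
- move=> /drazin_invertible_XsubC d1 /drazin_invertible_XsubC d2.
  move=> /drazin_invertible_XsubC d3.
  exact/sum_divXnP/divXnM/d3/divXnM.
Qed.
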